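(* Given the linear quantum stochastic system $dx = (\mathbb{J}_{2n} R -\tfrac{1}{2}C^{\sharp}C) x\, dt -C^{\sharp}\Sigma\, d\mathcal{U}$, $d\mathcal{Y} = C x\, dt + \Sigma\, d\mathcal{U}$, there exists a real symplectic transformation $V$ such that the following hold: 1. The transformed states $\begin{pmatrix} \hat{q} \\ \hat{p} \end{pmatrix}=\hat{x} = Vx= V \begin{pmatrix} q \\ p \end{pmatrix}$ can be partitioned as $\hat{q}=\begin{pmatrix}\hat{q}_a \\ \hat{q}_b \\ \hat{q}_c\end{pmatrix}$, $\hat{p}=\begin{pmatrix}\hat{p}_a \\ \hat{p}_b \\ \hat{p}_c\end{pmatrix}$, with $\hat{q}_a,\hat{p}_a\in$ ($k\times 1$), $\hat{q}_b,\hat{p}_b$ ($l\times 1$), $\hat{q}_c,\hat{p}_c$ ($(n-k-l)\times 1$), where (a) the states $\hat{q}_a$ and $\hat{p}_a$ are both controllable and observable; (b) the states $\hat{p}_b$ are controllable but unobservable; (c) the states $\hat{q}_b$ are uncontrollable but observable; (d) the states $\hat{q}_c$ and $\hat{p}_c$ are both uncontrollable and unobservable. 2. In the transformed states the system takes the form $d\hat{x} = \hat{A}\hat{x}\,dt + \hat{B}\,d\mathcal{U}$, $d\mathcal{Y} = \hat{C}\hat{x}\,dt + D\, d\mathcal{U}$ (with $D=\Sigma$), where, with respect to the ordering $(\hat{q}_a,\hat{q}_b,\hat{q}_c,\hat{p}_a,\hat{p}_b,\hat{p}_c)$, $\hat{A}=\begin{pmatrix} A_{co,11} & A_{13,1}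 & 0 & A_{co,12} & 0 & 0 \\ 0 & A_{\bar{c}o} & 0 & 0 & 0 & 0 \\ 0 & A_{43,1} & A_{\bar{c}\bar{o},11} & 0 & 0 & A_{\bar{c}\bar{o},12} \\ A_{co,21} & A_{13,2} & 0 & A_{co,22} & 0 & 0 \\ A_{21,1} & A_{23} & A_{24,1} & A_{21,2} & A_{c\bar{o}} & A_{24,2} \\ 0 & A_{43,2} & A_{\bar{c}\bar{o},21} & 0 & 0 & A_{\bar{c}\bar{o},22} \end{pmatrix}$, $\hat{B} = \begin{pmatrix} B_{co,1} \\ 0 \\ 0 \\ B_{co,2} \\ B_{c\bar{o}} \\ 0 \end{pmatrix}$, $\hat{C} = \begin{pmatrix} C_{co,1} & C_{\bar{c}o} & 0 & C_{co,2} & 0 & 0 \end{pmatrix}$.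
   Context: Setting: $x=\begin{pmatrix} q\\ p\end{pmatrix}$ with $q=(q_1,\dots,q_n)^\top$, $p=(p_1,\dots,p_n)^\top$ self-adjoint position/momentum operators satisfying the canonical commutation relations $[x,x^\top]=\imath\mathbb{J}_{2n}$, where $\mathbb{J}_{2k}=\begin{pmatrix} 0_{k\times k} & I_k\\ -I_k & 0_{k\times k}\end{pmatrix}$. $R$ is a real symmetric $2n\times 2n$ Hamiltonian matrix, $C$ a real $2m\times 2n$ coupling matrix, $\Sigma$ a real symplectic $2m\times 2m$ matrix, and $\mathcal{U},\mathcal{Y}$ are the $2m$-vectors of input and output field quadratures. For a $2r\times 2s$ matrix $X$, $X^{\sharp}=-\mathbb{J}_{2s}X^{\dagger}\mathbb{J}_{2r}$; a $2k\times 2k$ matrix $T$ is symplectic if $TT^{\sharp}=T^{\sharp}T=I_{2k}$. Only real symplectic state transformations preserve the structure of the system (self-adjointness and CCRs). With $A=\mathbb{J}_{2n}R-\tfrac12 C^\sharp C$, $B=-C^\sharp\Sigma$, the controllability matrix is $(B\ AB\ \cdots\ A^{2n-1}B)$ and the observability matrix is $(C; CA; \dots; CA^{2n-1})$; the controllable subspace is the image of the controllability matrix, the unobservable subspace is the kernel of the observability matrix, and the uncontrollable and observable subspaces are defined as the orthogonal complements in $\mathbb{R}^{2n}$ of the controllable and unobservable subspaces, respectively. *)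

From HB Require Import structures.
From mathcomp Require Import all_boot all_order all_algebra.
From mathcomp Require Export reals.
Set Implicit Arguments. Unset Strict Implicit. Unset Printing Implicit Defensive.
Import GRing.Theory Num.Theory.
Local Open Scope ring_scope.

Definition Jmx (R : realType) (k : nat) : 'M[R]_(k + k) :=
  block_mx 0 1%:M (- 1%:M) 0.

(* X^sharp = - J_{2s} X^dagger J_{2r}  for real X of size 2r x 2s (dagger = transpose) *)
Definition sharp (R : realType) (r s : nat) (X : 'M[R]_(r + r, s + s))
  : 'M[R]_(s + s, r + r) := - (Jmx R s *m X^T *m Jmx R r).

Definition symplectic (R : realType) (k : nat) (T : 'M[R]_(k + k)) : Prop :=
  T *m sharp T = 1%:M /\ sharp T *m T = 1%:M.

Definition Amat (R : realType) (n m : nat) (H : 'M[R]_(n + n))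
  (C : 'M[R]_(m + m, n + n)) : 'M[R]_(n + n) :=
  Jmx R n *m H - 2^-1 *: (sharp C *m C).

Definition Bmat (R : realType) (n m : nat) (C : 'M[R]_(m + m, n + n))
  (Sig : 'M[R]_(m + m)) : 'M[R]_(n + n, m + m) := - (sharp C *m Sig).

Definition controllable_sub (R : realType) (N p : nat) (A : 'M[R]_N)
  (B : 'M[R]_(N, p)) (v : 'cV[R]_N) : Prop :=
  exists u : 'I_N -> 'cV[R]_p, v = \sum_(i < N) (A ^+ i *m B *m u i).

Definition unobservable_sub (R : realType) (N q : nat) (A : 'M[R]_N)
  (C : 'M[R]_(q, N)) (v : 'cV[R]_N) : Prop :=
  forall i : 'I_N, C *m A ^+ i *m v = 0.

Definition orth (R : realType) (N : nat) (S : 'cV[R]_N -> Prop) (w : 'cV[R]_N)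
  : Prop := forall v, S v -> w^T *m v = 0.

Definition uncontrollable_sub (R : realType) (N p : nat) (A : 'M[R]_N)
  (B : 'M[R]_(N, p)) := orth (controllable_sub A B).

Definition observable_sub (R : realType) (N q : nat) (A : 'M[R]_N)
  (C : 'M[R]_(q, N)) := orth (unobservable_sub A C).

(* the six groups of transformed coordinates, xhat = (qa; qb; qc; pa; pb; pc) *)
Inductive blk := Qa | Qb | Qc | Pa | Pb | Pc.

Definition blk_of (n k l : nat) (i : 'I_(n + n)) : blk :=
  if (i < n)%N then
    (if (i < k)%N then Qa else if (i < k + l)%N then Qb else Qc)
  else
    (if (i - n < k)%N then Pa else if (i - n < k + l)%N then Pb else Pc).

Arguments blk_of : clear implicits.

Definition evec (R : realType) (N : nat) (i : 'I_N) : 'cV[R]_N := delta_mx i ord0.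

Definition states_classified (R : realType) (n m k l : nat)
  (Ah : 'M[R]_(n + n)) (Bh : 'M[R]_(n + n, m + m)) (Ch : 'M[R]_(m + m, n + n))
  : Prop :=
  forall i : 'I_(n + n),
    match blk_of n k l i with
    | Qa | Pa => controllable_sub Ah Bh (evec R i) /\ observable_sub Ah Ch (evec R i)
    | Pb => controllable_sub Ah Bh (evec R i) /\ unobservable_sub Ah Ch (evec R i)
    | Qb => uncontrollable_sub Ah Bh (evec R i) /\ observable_sub Ah Ch (evec R i)
    | Qc | Pc => uncontrollable_sub Ah Bh (evec R i) /\ unobservable_sub Ah Ch (evec R i)
    end.

(* block pattern of Ahat (rows/columns ordered qa qb qc pa pb pc):
   false = the block is required to be zero *)
Definition A_allowed (bi bj : blk) : bool :=
  match bi, bj with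
  | Qa, (Qa | Qb | Pa) => true
  | Qb, Qb => true
  | Qc, (Qb | Qc | Pc) => true
  | Pa, (Qa | Qb | Pa) => true
  | Pb, _ => true
  | Pc, (Qb | Qc | Pc) => true
  | _, _ => false
  end.

Definition B_allowed (bi : blk) : bool :=
  match bi with Qa | Pa | Pb => true | _ => false end.

Definition C_allowed (bj : blk) : bool :=
  match bj with Qa | Qb | Pa => true | _ => false end.

Definition kalman_block_form (R : realType) (n m k l : nat)
  (Ah : 'M[R]_(n + n)) (Bh : 'M[R]_(n + n, m + m)) (Ch : 'M[R]_(m + m, n + n))
  : Prop :=
  (forall i j : 'I_(n + n), ~~ A_allowed (blk_of n k l i) (blk_of n k l j) -> Ah i j = 0)
  /\ (forall (i : 'I_(n + n)) (j : 'I_(m + m)), ~~ B_allowed (blk_of n k l i) -> Bh i j = 0)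
  /\ (forall (i : 'I_(m + m)) (j : 'I_(n + n)), ~~ C_allowed (blk_of n k l j) -> Ch i j = 0).

(* Write w(x, y) = x^T J y.  The shape of A = J H - C^# C / 2 and B = -C^# Sig
   gives A^T J + J A = -C^T J C and B^T J = -Sig^T J C, so w(A^i B u, x) equals
   +-u^T Sig^T J C A^i x as soon as C A^j x = 0 for all j < i.  As Sig^T J is
   invertible, the unobservable subspace is exactly the w-complement of the
   controllable subspace W.  A greedy construction gives a symplectic basis
   (Q_i, P_i) adapted to W: the first k pairs lie in W, the next l vectors P_i span
   the radical of W (its intersection with its w-complement), and the remaining
   pairs lie in the w-complement of W.  Coordinates in a symplectic basis are read
   off with w, so V = [Q P]^-1 is symplectic and each transformed state is
   classified by where Q_i and P_i lie.  The zero pattern of (Ah, Bh, Ch) follows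
   from the classification alone: the controllable subspace is Ah-invariant and
   contains the columns of Bh, the unobservable one is Ah-invariant and lies in
   the kernel of Ch. *)

From HB Require Import structures.
From mathcomp Require Import all_boot all_order all_algebra.
From mathcomp Require Import reals.
From mathcomp Require Import zify.
From Stdlib Require Import Classical.
Set Implicit Arguments. Unset Strict Implicit. Unset Printing Implicit Defensive.
Import GRing.Theory Num.Theory.
Local Open Scope ring_scope.

(** * Controllable and unobservable subspaces *)

Lemma mxpow_span (F : fieldType) N (A : 'M[F]_N) i :
  exists c : 'I_N -> F, A ^+ i = \sum_(j < N) c j *: A ^+ j.
Proof.
case: N A => [|N] A; first by exists (fun _ => 0); apply/matrixP => [[]].
pose q := 'X^i %% char_poly A.
have size_q : (size q <= N.+1)%N.
  by rewrite -ltnS -(size_char_poly A) ltn_modpN0 // monic_neq0 ?char_poly_monic.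
exists (fun j => q`_j).
have -> : A ^+ i = horner_mx A q.
  rewrite -[A in LHS]horner_mx_X -rmorphXn /= {1}(divp_eq 'X^i (char_poly A)).
  by rewrite rmorphD rmorphM /= Cayley_Hamilton mulr0 add0r.
rewrite -[X in horner_mx A X](take_poly_id size_q) /take_poly poly_def raddf_sum.
by apply: eq_bigr => j _; rewrite /= horner_mxZ rmorphXn /= horner_mx_X.
Qed.

Lemma mulmx_evec (R : realType) m n (X : 'M[R]_(m, n)) j : X *m evec R j = col j X.
Proof. by rewrite colE. Qed.

Lemma tr_evec_mul (R : realType) N (v : 'cV[R]_N) j : (evec R j)^T *m v = (v j 0)%:M.
Proof. by rewrite trmx_delta -rowE; apply/matrixP => a b; rewrite !ord1 !mxE. Qed.

Lemma cV_eq0 (R : realType) N (v : 'cV[R]_N) :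
  (forall u : 'cV[R]_N, (u^T *m v) 0 0 = 0) -> v = 0.
Proof.
by move=> uv0; apply/matrixP => j k; rewrite (ord1 k) mxE -(uv0 (evec R j)) tr_evec_mul mxE.
Qed.

Lemma trmx_mul_self_neq0 (R : realType) N (y : 'cV[R]_N) : y != 0 -> (y^T *m y) 0 0 != 0.
Proof.
apply: contraNneq => yy0.
apply/eqP/matrixP => i k; rewrite (ord1 k) mxE.
have sum_sq0 : \sum_j y j 0 ^+ 2 = 0.
  by rewrite -[RHS]yy0 mxE; apply: eq_bigr => j _; rewrite mxE expr2.
have /psumr_eq0P sq0 : forall j : 'I_N, true -> 0 <= y j 0 ^+ 2 by move=> j _; apply: sqr_ge0.
by apply/eqP; rewrite -sqrf_eq0 sq0.
Qed.

Section KalmanSubspaces.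
Variables (R : realType) (N p q : nat).
Variables (A : 'M[R]_N) (B : 'M[R]_(N, p)) (C : 'M[R]_(q, N)).

Lemma controllable_sub0 : controllable_sub A B 0.
Proof. by exists (fun _ => 0); rewrite big1 // => i _; rewrite mulmx0. Qed.

Lemma controllable_subD x y :
  controllable_sub A B x -> controllable_sub A B y -> controllable_sub A B (x + y).
Proof.
move=> [u ->] [v ->]; exists (fun i => u i + v i).
by rewrite -big_split; apply: eq_bigr => i _; rewrite mulmxDr.
Qed.

Lemma controllable_subZ a x : controllable_sub A B x -> controllable_sub A B (a *: x).
Proof.
move=> [u ->]; exists (fun i => a *: u i).
by rewrite scaler_sumr; apply: eq_bigr => i _; rewrite scalemxAr.
Qed.

Lemma controllable_sub_sum I (r : seq I) (F : I -> 'cV[R]_N) :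
  (forall i, controllable_sub A B (F i)) -> controllable_sub A B (\sum_(i <- r) F i).
Proof.
move=> ctrlF; apply: big_ind => //; [exact: controllable_sub0 | exact: controllable_subD].
Qed.

Lemma controllable_sub_pow i u : controllable_sub A B (A ^+ i *m B *m u).
Proof.
have [c ->] := mxpow_span A i; exists (fun j => c j *: u).
by rewrite !mulmx_suml; apply: eq_bigr => j _; rewrite -!scalemxAl scalemxAr.
Qed.

Lemma controllable_subM x : controllable_sub A B x -> controllable_sub A B (A *m x).
Proof.
move=> [u ->]; rewrite mulmx_sumr; apply: controllable_sub_sum => i.
by rewrite !mulmxA mulmxE -exprS; apply: controllable_sub_pow.
Qed.

Lemma unobservable_sub_pow x i : unobservable_sub A C x -> C *m A ^+ i *m x = 0.
Proof.
move=> unobs_x; have [c ->] := mxpow_span A i.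
rewrite mulmx_sumr mulmx_suml big1 // => j _.
by rewrite -scalemxAr -scalemxAl unobs_x scaler0.
Qed.

Lemma unobservable_subM x : unobservable_sub A C x -> unobservable_sub A C (A *m x).
Proof.
by move=> unobs_x i; rewrite mulmxA -(mulmxA C) mulmxE -exprSr unobservable_sub_pow.
Qed.

Lemma orth_evecP (S : 'cV[R]_N -> Prop) j :
  orth S (evec R j) <-> forall v, S v -> v j 0 = 0.
Proof.
split=> orthS v /orthS; rewrite ?tr_evec_mul.
  by move/matrixP/(_ 0 0); rewrite !mxE.
by move->; rewrite raddf0.
Qed.

Lemma controllable_evec_entry i j :
  controllable_sub A B (evec R j) -> uncontrollable_sub A B (evec R i) -> A i j = 0.
Proof.
move=> ctrl_j /orth_evecP/(_ _ (controllable_subM ctrl_j)).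
by rewrite mulmx_evec mxE.
Qed.

Lemma unobservable_evec_entry i j :
  unobservable_sub A C (evec R j) -> observable_sub A C (evec R i) -> A i j = 0.
Proof.
move=> unobs_j /orth_evecP/(_ _ (unobservable_subM unobs_j)).
by rewrite mulmx_evec mxE.
Qed.

Lemma uncontrollable_evec_row i j : uncontrollable_sub A B (evec R i) -> B i j = 0.
Proof.
move/orth_evecP/(_ _ (controllable_sub_pow 0 (evec R j))).
by rewrite expr0 mul1mx mulmx_evec mxE.
Qed.

Lemma unobservable_evec_col i j : unobservable_sub A C (evec R j) -> C i j = 0.
Proof.
move/(unobservable_sub_pow 0); rewrite expr0 mulmx1 mulmx_evec.
by move/matrixP/(_ i 0); rewrite !mxE.
Qed.

End KalmanSubspaces.

Definition coord_null (R : realType) N (V : 'M[R]_N) (S : 'cV[R]_N -> Prop) j :=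
  forall x, S x -> (V *m x) j 0 = 0.

Section Similarity.
Variables (R : realType) (N p q : nat) (V : 'M[R]_N).
Hypothesis V_unit : V \in unitmx.
Variables (A : 'M[R]_N) (B : 'M[R]_(N, p)) (C : 'M[R]_(q, N)).

Lemma conjmx_pow i : (V *m A *m invmx V) ^+ i = V *m A ^+ i *m invmx V.
Proof.
elim: i => [|i IH]; first by rewrite !expr0 mulmx1 mulmxV.
by rewrite !exprS -!mulmxE IH !mulmxA mulmxKV.
Qed.

Lemma controllable_sub_conj v :
  controllable_sub (V *m A *m invmx V) (V *m B) v <-> controllable_sub A B (invmx V *m v).
Proof.
have termE i u : (V *m A *m invmx V) ^+ i *m (V *m B) *m u = V *m (A ^+ i *m B *m u).
  by rewrite conjmx_pow !mulmxA mulmxKV.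
split=> [[u ->] | [u ctrl_v]]; exists u.
  by rewrite mulmx_sumr; apply: eq_bigr => i _; rewrite termE mulKmx.
rewrite -[v](mulKVmx V_unit) ctrl_v mulmx_sumr.
by apply: eq_bigr => i _; rewrite termE.
Qed.

Lemma unobservable_sub_conj v :
  unobservable_sub (V *m A *m invmx V) (C *m invmx V) v <->
  unobservable_sub A C (invmx V *m v).
Proof.
have termE i : C *m invmx V *m (V *m A *m invmx V) ^+ i *m v = C *m A ^+ i *m (invmx V *m v).
  by rewrite conjmx_pow !mulmxA mulmxKV.
by split=> unobs i; [rewrite -termE | rewrite termE]; apply: unobs.
Qed.

Lemma orth_evec_conj (S S0 : 'cV[R]_N -> Prop) j :
  (forall v, S v <-> S0 (invmx V *m v)) ->
  orth S (evec R j) <-> coord_null V S0 j.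
Proof.
move=> SE; rewrite orth_evecP; split=> orthS x.
  by move=> S0x; apply: orthS; rewrite SE mulKmx.
by rewrite SE => /orthS; rewrite mulKVmx.
Qed.

End Similarity.

Lemma classified_block_form (R : realType) n m k l (Ah : 'M[R]_(n + n))
    (Bh : 'M[R]_(n + n, m + m)) (Ch : 'M[R]_(m + m, n + n)) :
  states_classified k l Ah Bh Ch -> kalman_block_form k l Ah Bh Ch.
Proof.
move=> cls; split; [|split] => i j.
- have := cls i; have := cls j.
  case: (blk_of n k l j) => -[cj oj]; case: (blk_of n k l i) => -[ci oi] //= _;
    solve [exact: controllable_evec_entry cj ci | exact: unobservable_evec_entry oj oi].
- by have := cls i; case: (blk_of n k l i) => -[ci _] //= _; apply: uncontrollable_evec_row ci.
- by have := cls j; case: (blk_of n k l j) => -[_ oj] //= _; apply: unobservable_evec_col oj.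
Qed.

(** * Symplectic linear algebra *)

Section SymplecticMatrices.
Variables (R : realType) (k : nat).
Local Notation J := (Jmx R k).

Lemma trmx_Jmx : J^T = - J.
Proof.
by rewrite /Jmx tr_block_mx !trmx0 linearN /= trmx1 opp_block_mx !oppr0 opprK.
Qed.

Lemma mulmx_JJ : J *m J = - 1%:M.
Proof.
rewrite /Jmx mulmx_block !mulmx0 !mul0mx !add0r !addr0 mulmx1 mul1mx.
by rewrite -[RHS]raddfN /= scalar_mx_block raddfN.
Qed.

Lemma Jmx_unit : J \in unitmx.
Proof.
have JJV : J *m - J = 1%:M by rewrite mulmxN mulmx_JJ opprK.
by case/mulmx1_unit: JJV.
Qed.

Lemma mulJ_col_mx (a b : 'cV[R]_k) : J *m col_mx a b = col_mx b (- a).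
Proof. by rewrite /Jmx mul_block_col !mul0mx mul1mx add0r addr0 mulNmx mul1mx. Qed.

Lemma symplectic_gram (T : 'M[R]_(k + k)) : T^T *m J *m T = J -> symplectic T.
Proof.
move=> gramT; have lT : sharp T *m T = 1%:M.
  by rewrite /sharp mulNmx -!mulmxA (mulmxA T^T) gramT mulmx_JJ opprK.
by split=> //; apply: mulmx1C.
Qed.

Lemma gram_invmx (M : 'M[R]_(k + k)) :
  M \in unitmx -> M^T *m J *m M = J -> (invmx M)^T *m J *m invmx M = J.
Proof.
move=> M_unit gramM; rewrite -{1}gramM trmx_inv !mulmxA mulmxK //.
by rewrite mulVmx ?unitmx_tr // mul1mx.
Qed.

End SymplecticMatrices.

Lemma mulJ_sharp (R : realType) p q (X : 'M[R]_(p + p, q + q)) :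
  Jmx R q *m sharp X = X^T *m Jmx R p.
Proof. by rewrite /sharp mulmxN !mulmxA mulmx_JJ !mulNmx mul1mx opprK. Qed.

Section SymplecticForm.
Variables (R : realType) (n : nat).
Local Notation vec := 'cV[R]_(n + n).
Local Notation J := (Jmx R n).
Implicit Types x y z : vec.

Definition sform x y : R := (x^T *m J *m y) 0 0.

Lemma sformDl x y z : sform (x + y) z = sform x z + sform y z.
Proof. by rewrite /sform linearD /= !mulmxDl mxE. Qed.

Lemma sformDr x y z : sform z (x + y) = sform z x + sform z y.
Proof. by rewrite /sform mulmxDr mxE. Qed.

Lemma sformZl a x y : sform (a *: x) y = a * sform x y.
Proof. by rewrite /sform linearZ /= -!scalemxAl mxE. Qed.

Lemma sformZr a x y : sform x (a *: y) = a * sform x y.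
Proof. by rewrite /sform -scalemxAr mxE. Qed.

Lemma sformBl x y z : sform (x - y) z = sform x z - sform y z.
Proof. by rewrite sformDl -scaleN1r sformZl mulN1r. Qed.

Lemma sformBr x y z : sform z (x - y) = sform z x - sform z y.
Proof. by rewrite sformDr -scaleN1r sformZr mulN1r. Qed.

Lemma sform_suml I (r : seq I) (F : I -> vec) y :
  sform (\sum_(i <- r) F i) y = \sum_(i <- r) sform (F i) y.
Proof. by rewrite /sform raddf_sum !mulmx_suml summxE. Qed.

Lemma sform_sumr I (r : seq I) (F : I -> vec) y :
  sform y (\sum_(i <- r) F i) = \sum_(i <- r) sform y (F i).
Proof. by rewrite /sform mulmx_sumr summxE. Qed.

Lemma sformC x y : sform y x = - sform x y.
Proof.
have trE (M : 'M[R]_1) : M 0 0 = M^T 0 0 by rewrite mxE.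
rewrite /sform [in RHS]trE !trmx_mul trmxK trmx_Jmx.
by rewrite mulNmx mulmxN mulmxA [in RHS]mxE opprK.
Qed.

Lemma sformxx x : sform x x = 0.
Proof.
by apply/eqP; rewrite -eqNr -sformC.
Qed.

Lemma sform_Jl x y : sform (J *m x) y = (x^T *m y) 0 0.
Proof.
by rewrite /sform trmx_mul trmx_Jmx mulmxN mulNmx -mulmxA mulmx_JJ mulmxN mulmx1 opprK.
Qed.

Lemma mx_sform p q (X : 'M[R]_(n + n, p)) (Y : 'M[R]_(n + n, q)) a b :
  (X^T *m J *m Y) a b = sform (col a X) (col b Y).
Proof.
rewrite /sform tr_col -row_mul !mxE.
by apply: eq_bigr => i _; rewrite !mxE.
Qed.

Definition scompl (S : vec -> Prop) x := forall w, S w -> sform w x = 0.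

End SymplecticForm.

Lemma sum_kron (R : realType) (F : nat -> R) t j :
  (j < t)%N -> \sum_(i < t) F i * (i == j :> nat)%:R = F j.
Proof.
move=> lt_jt; under eq_bigr do rewrite mulr_natr mulrb.
by rewrite -big_mkcond big_ord1_eq lt_jt.
Qed.

Section SymplecticFamilies.
Variables (R : realType) (n : nat).
Local Notation vec := 'cV[R]_(n + n).
Local Notation J := (Jmx R n).
Implicit Types (t : nat) (Q P : nat -> vec) (x y z : vec).

(* Families are indexed by [nat]; only their first [t] pairs are constrained. *)
Definition symp_family t Q P := forall i j, (i < t)%N -> (j < t)%N ->
  [/\ sform (Q i) (Q j) = 0, sform (P i) (P j) = 0 & sform (Q i) (P j) = (i == j)%:R].

Definition sorth t Q P x := forall i, (i < t)%N -> sform (Q i) x = 0 /\ sform (P i) x = 0.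

Definition sproj t Q P z : vec :=
  \sum_(i < t) (- sform (P i) z *: Q i + sform (Q i) z *: P i).

Definition vecs_mx t Q : 'M[R]_(n + n, t) := \matrix_(i < n + n, j < t) Q j i 0.

Definition basis_mx t Q P := row_mx (vecs_mx t Q) (vecs_mx t P).

Lemma col_vecs_mx t Q (j : 'I_t) : col j (vecs_mx t Q) = Q j.
Proof. by apply/matrixP => i k; rewrite !mxE (ord1 k). Qed.

Lemma basis_mx_gram t Q P :
  symp_family t Q P -> (basis_mx t Q P)^T *m J *m basis_mx t Q P = Jmx R t.
Proof.
move=> famQP; apply/matrixP => a b; rewrite mx_sform.
rewrite -(splitK a) -(splitK b) /Jmx.
case: (split a) => a'; case: (split b) => b' /=;
  rewrite ?colKl ?colKr !col_vecs_mx ?block_mxEul ?block_mxEur ?block_mxEdl ?block_mxEdr !mxE;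
  have [QQ PP QP] := famQP _ _ (ltn_ord a') (ltn_ord b') => //.
by have [_ _ QP'] := famQP _ _ (ltn_ord b') (ltn_ord a'); rewrite sformC QP' eq_sym.
Qed.

Lemma symp_family_le t Q P : symp_family t Q P -> (t <= n)%N.
Proof.
move=> /basis_mx_gram gramQP.
have := mxrankM_maxr ((basis_mx t Q P)^T *m J) (basis_mx t Q P).
rewrite gramQP mxrank_unit ?Jmx_unit // => /leq_trans/(_ (rank_leq_row _)).
lia.
Qed.

Lemma sorth_nonzero t Q P : (t < n)%N -> exists2 y, sorth t Q P y & y != 0.
Proof.
move=> lt_tn; pose K := (basis_mx t Q P)^T *m J.
have /rowV0Pn[v /sub_kermxP vK v_neq0] : kermx K^T != 0.
  by rewrite -mxrank_eq0 mxrank_ker; have := rank_leq_col K^T; lia.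
exists v^T; last by rewrite trmx_eq0.
have Kv : K *m v^T = 0 by rewrite -[K]trmxK -trmx_mul vK trmx0.
move=> i lt_it; split.
- have := mx_sform (basis_mx t Q P) v^T (lshift t (Ordinal lt_it)) 0.
  by rewrite -/K Kv colKl col_vecs_mx col_id mxE => <-.
- have := mx_sform (basis_mx t Q P) v^T (rshift t (Ordinal lt_it)) 0.
  by rewrite -/K Kv colKr col_vecs_mx col_id mxE => <-.
Qed.

Lemma sorth_sproj t Q P z : symp_family t Q P -> sorth t Q P (z - sproj t Q P z).
Proof.
move=> famQP j lt_jt; rewrite /sproj !sformBr !sform_sumr.
split; apply/eqP; rewrite subr_eq0; apply/eqP;
  under [RHS]eq_bigr => i _ do rewrite sformDr !sformZr.
- rewrite -[LHS](sum_kron (fun i => sform (Q i) z) lt_jt); apply: eq_bigr => i _.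
  have [QQ _ QP] := famQP _ _ lt_jt (ltn_ord i).
  by rewrite QQ QP mulr0 add0r eq_sym.
- rewrite -[LHS](sum_kron (fun i => sform (P i) z) lt_jt); apply: eq_bigr => i _.
  have [_ PP _] := famQP _ _ lt_jt (ltn_ord i).
  have [_ _ QP] := famQP _ _ (ltn_ord i) lt_jt.
  by rewrite PP (sformC (Q i)) QP mulr0 addr0 mulrN mulNr opprK.
Qed.

Lemma sform_sproj t Q P z y : sorth t Q P y -> sform (sproj t Q P z) y = 0.
Proof.
move=> orth_y; rewrite sform_suml big1 // => i _.
have [Qy Py] := orth_y _ (ltn_ord i).
by rewrite sformDl !sformZl Qy Py !mulr0 addr0.
Qed.

Lemma sorthZ t Q P a x : sorth t Q P x -> sorth t Q P (a *: x).
Proof. by move=> orth_x i /orth_x[Qx Px]; rewrite !sformZr Qx Px !mulr0. Qed.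

Lemma sorth_le t t' Q P x : (t' <= t)%N -> sorth t Q P x -> sorth t' Q P x.
Proof. by move=> le_t't orth_x i lt_it'; apply/orth_x/(leq_trans lt_it'). Qed.

Lemma symp_familyW t t' Q P : (t' <= t)%N -> symp_family t Q P -> symp_family t' Q P.
Proof. by move=> le_t't famQP i j /leq_trans lt_it /leq_trans lt_jt; apply: famQP; auto. Qed.

Lemma eq_sorth t Q P Q' P' x : (forall i, (i < t)%N -> Q' i = Q i /\ P' i = P i) ->
  sorth t Q P x -> sorth t Q' P' x.
Proof. by move=> eqQP orth_x i lt_it; have [-> ->] := eqQP i lt_it; apply: orth_x. Qed.

Lemma symp_family_sorth t t' Q P i : symp_family t Q P -> (t' <= i < t)%N ->
  sorth t' Q P (Q i) /\ sorth t' Q P (P i).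
Proof.
move=> famQP /andP[le_t'i lt_it]; split=> j lt_jt';
  have lt_ji := leq_trans lt_jt' le_t'i; have lt_jt := ltn_trans lt_ji lt_it;
  have [QQ PP QP] := famQP j i lt_jt lt_it; have [_ _ QP'] := famQP i j lt_it lt_jt.
- by rewrite QQ sformC QP' gtn_eqF // oppr0.
- by rewrite PP QP ltn_eqF.
Qed.

Definition extend_at (f : nat -> vec) t x : nat -> vec := fun i => if i == t then x else f i.

Lemma symp_family_extend t Q P x y :
  symp_family t Q P -> sorth t Q P x -> sorth t Q P y -> sform x y = 1 ->
  symp_family t.+1 (extend_at Q t x) (extend_at P t y).
Proof.
move=> famQP orth_x orth_y xy i j; rewrite !ltnS /extend_at.
rewrite [(i <= t)%N]leq_eqVlt [(j <= t)%N]leq_eqVlt.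
case: (eqVneq i t) => [-> | ne_it] /= lt_it; case: (eqVneq j t) => [-> | ne_jt] /= lt_jt.
- by rewrite !sformxx xy.
- have [Qx Px] := orth_x j lt_jt; have [Qy Py] := orth_y j lt_jt.
  by rewrite sformC Qx sformC Py sformC Px !oppr0.
- have [Qx Px] := orth_x i lt_it; have [Qy Py] := orth_y i lt_it.
  by rewrite Qx Py Qy (negbTE ne_it).
- exact: famQP.
Qed.

Lemma sorth_partner t Q P y : symp_family t Q P -> sorth t Q P y -> y != 0 ->
  exists2 x, sorth t Q P x & sform x y = 1.
Proof.
(* [sform (J y) y = |y|^2 > 0], and projecting [J y] away from the family keeps it. *)
move=> famQP orth_y y_neq0; pose z := J *m y - sproj t Q P (J *m y).
have zy : sform z y = (y^T *m y) 0 0 by rewrite sformBl sform_sproj // subr0 sform_Jl.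
exists ((sform z y)^-1 *: z); first exact/sorthZ/sorth_sproj.
by rewrite sformZl mulVf // zy trmx_mul_self_neq0.
Qed.

Lemma symp_family_saturate (Good : vec -> vec -> Prop) t Q P : symp_family t Q P ->
  exists t' Q' P', [/\ (t <= t')%N, symp_family t' Q' P',
    (forall i, (i < t)%N -> Q' i = Q i /\ P' i = P i),
    (forall i, (t <= i < t')%N -> Good (Q' i) (P' i)) &
    forall x y, sorth t' Q' P' x -> sorth t' Q' P' y -> Good x y -> sform x y <> 1].
Proof.
have [d] := ubnP (n - t); elim: d => // d IH in t Q P *; move=> lt_nt_d famQP.
have [[x [y [orth_x orth_y good xy]]] | no_pair] :=
  classic (exists x y, [/\ sorth t Q P x, sorth t Q P y, Good x y & sform x y = 1]);
  last first.
  exists t, Q, P; split=> // [i /andP[le_ti lt_it] | x y orth_x orth_y good xy].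
    by have := leq_trans lt_it le_ti; rewrite ltnn.
  by apply: no_pair; exists x, y.
have famQP' := symp_family_extend famQP orth_x orth_y xy.
have lt_tn := symp_family_le famQP'.
have [|t' [Q' [P' [le_t't famQP'' agree good' sat]]]] := IH t.+1 _ _ _ famQP'; first lia.
exists t', Q', P'; split=> //; first exact: ltnW.
- move=> i lt_it; have [-> ->] := agree i (ltnW lt_it).
  by rewrite /extend_at (ltn_eqF lt_it).
- move=> i /andP[le_ti lt_it']; case: (eqVneq i t) => [-> | ne_it].
    by have [-> ->] := agree t (ltnSn t); rewrite /extend_at eqxx.
  by apply: good'; rewrite lt_it' andbT ltn_neqAle eq_sym ne_it.
Qed.

End SymplecticFamilies.

Section AdaptedBasis.
Variables (R : realType) (n : nat).
Local Notation vec := 'cV[R]_(n + n).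
Variable W : vec -> Prop.
Hypotheses (W0 : W 0) (WD : forall x y, W x -> W y -> W (x + y)).
Hypothesis WZ : forall a x, W x -> W (a *: x).

Lemma sorth_scompl t1 t2 (Q P : nat -> vec) : symp_family t2 Q P -> (t1 <= t2)%N ->
  (forall i, (i < t1)%N -> W (Q i) /\ W (P i)) ->
  (forall i, (t1 <= i < t2)%N -> W (P i) /\ scompl W (P i)) ->
  (forall x y, sorth t1 Q P x -> sorth t1 Q P y -> W x -> W y -> sform x y = 0) ->
  (forall y, sorth t2 Q P y -> W y -> scompl W y -> y = 0) ->
  forall z, sorth t2 Q P z -> scompl W z.
Proof.
(* The residue [w - sproj w] of any [w] in [W] lies in the radical of [W] and is
   orthogonal to the family, hence vanishes. *)
move=> famQP le_t12 W_sympl W_rad W_iso W_rad0 z orth_z w Ww.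
have W_sproj v : W v -> W (sproj t2 Q P v).
  move=> Wv; apply: big_ind => // i _; case: (ltnP i t1) => [/W_sympl[WQ WP] | le_t1i].
    by apply: WD; apply: WZ.
  have [WP oP] : W (P i) /\ scompl W (P i) by apply: W_rad; rewrite le_t1i ltn_ord.
  by rewrite sformC (oP v Wv) !oppr0 scale0r add0r; apply: WZ.
have W_res v : W v -> W (v - sproj t2 Q P v).
  by move=> Wv; apply: WD => //; rewrite -scaleN1r; apply/WZ/W_sproj.
have res_orth v : sorth t2 Q P (v - sproj t2 Q P v) by exact: sorth_sproj.
have res0 : w - sproj t2 Q P w = 0.
  apply: W_rad0 (res_orth w) (W_res w Ww) _ => v Wv.
  rewrite -(subrK (sproj t2 Q P v) v) sformDl sform_sproj // addr0.
  by apply: W_iso; [apply: sorth_le le_t12 _ .. | apply: W_res | apply: W_res].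
by rewrite -(subrK (sproj t2 Q P w) w) res0 add0r sform_sproj.
Qed.

Lemma adapted_symp_basis : exists t1 t2 (Q P : nat -> vec),
  [/\ (t1 <= t2 <= n)%N, symp_family n Q P,
   (forall i, (i < t1)%N -> W (Q i) /\ W (P i)),
   (forall i, (t1 <= i < t2)%N -> W (P i) /\ scompl W (P i)) &
   (forall i, (t2 <= i < n)%N -> scompl W (Q i) /\ scompl W (P i))].
Proof.
(* Three greedy passes: pairs inside [W], then pairs whose [P] lies in the radical
   of [W], then arbitrary pairs, which fill up to [n] by [sorth_partner]. *)
have fam0 : symp_family 0 (fun=> 0 : vec) (fun=> 0) by [].
have [t1 [Q1 [P1 [_ fam1 _ good1 sat1]]]] :=
  symp_family_saturate (fun x y => W x /\ W y) fam0.
have [t2 [Q2 [P2 [le_t12 fam2 agree12 good2 sat2]]]] :=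
  symp_family_saturate (fun _ y => W y /\ scompl W y) fam1.
have [t3 [Q [P [le_t23 fam agree23 _ sat3]]]] := symp_family_saturate (fun _ _ => True) fam2.
have t3n : t3 = n.
  apply/eqP; rewrite eqn_leq (symp_family_le fam) leqNgt; apply/negP => lt_t3n.
  have [y orth_y y_neq0] := sorth_nonzero Q P lt_t3n.
  have [x orth_x xy] := sorth_partner fam orth_y y_neq0.
  exact: sat3 x y orth_x orth_y I xy.
subst t3.
have agree13 i : (i < t1)%N -> Q1 i = Q i /\ P1 i = P i.
  move=> lt_it1; have [<- <-] := agree12 i lt_it1.
  by have [-> ->] := agree23 i (leq_trans lt_it1 le_t12).
have W_sympl i : (i < t1)%N -> W (Q i) /\ W (P i).
  by move=> lt_it1; have [<- <-] := agree13 i lt_it1; apply: good1.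
have W_rad i : (t1 <= i < t2)%N -> W (P i) /\ scompl W (P i).
  by move=> /[dup] /andP[_ /agree23[_ ->]]; apply: good2.
have W_iso x y : sorth t1 Q P x -> sorth t1 Q P y -> W x -> W y -> sform x y = 0.
  move=> orth_x orth_y Wx Wy; apply/eqP/negPn/negP => xy_neq0.
  apply: (sat1 x ((sform x y)^-1 *: y)); rewrite ?sformZr ?mulVf //.
  - exact: eq_sorth agree13 orth_x.
  - exact/sorthZ/(eq_sorth agree13 orth_y).
  - by split=> //; apply: WZ.
have W_rad0 y : sorth t2 Q P y -> W y -> scompl W y -> y = 0.
  move=> orth_y Wy oy; apply/eqP/negPn/negP => y_neq0.
  have orth2_y : sorth t2 Q2 P2 y.
    by apply: eq_sorth orth_y => i /agree23[-> ->].
  have [x orth_x xy] := sorth_partner fam2 orth2_y y_neq0.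
  exact: sat2 x y orth_x orth2_y (conj Wy oy) xy.
have scompl_sorth := sorth_scompl (symp_familyW le_t23 fam) le_t12 W_sympl W_rad W_iso W_rad0.
exists t1, t2, Q, P; split=> //; first by rewrite le_t12.
by move=> i /(symp_family_sorth fam)[orth_Q orth_P]; split; apply: scompl_sorth.
Qed.

End AdaptedBasis.

Section BasisCoordinates.
Variables (R : realType) (n : nat) (Q P : nat -> 'cV[R]_(n + n)).
Hypothesis famQP : symp_family n Q P.
Local Notation J := (Jmx R n).
Local Notation M := (basis_mx n Q P).

Lemma basis_mx_unit : M \in unitmx.
Proof.
have : M^T *m J *m M \in unitmx by rewrite basis_mx_gram // Jmx_unit.
by rewrite unitmx_mul => /andP[].
Qed.

Lemma invmx_basis_mx : invmx M = - (J *m M^T *m J).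
Proof.
have left_inv : - (J *m M^T *m J) *m M = 1%:M.
  by rewrite mulNmx -!mulmxA (mulmxA M^T) basis_mx_gram // mulmx_JJ opprK.
by rewrite -[LHS]mul1mx -left_inv mulmxK ?basis_mx_unit.
Qed.

Lemma basis_coords x :
  invmx M *m x = col_mx (\col_a - sform (P a) x) (\col_a sform (Q a) x).
Proof.
have MtJx : M^T *m (J *m x) = col_mx (\col_a sform (Q a) x) (\col_a sform (P a) x).
  apply/matrixP => i k; rewrite (ord1 k) mulmxA mx_sform col_id -(splitK i).
  by case: split => a; rewrite ?colKl ?colKr col_vecs_mx ?col_mxEu ?col_mxEd mxE.
rewrite invmx_basis_mx mulNmx -!mulmxA MtJx mulJ_col_mx.
by rewrite opp_col_mx opprK; congr col_mx; apply/matrixP => i j; rewrite !mxE.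
Qed.

End BasisCoordinates.

Lemma blk_of_lshift n k l (a : 'I_n) :
  blk_of n k l (lshift n a) = if (a < k)%N then Qa else if (a < k + l)%N then Qb else Qc.
Proof. by rewrite /blk_of /= ltn_ord. Qed.

Lemma blk_of_rshift n k l (a : 'I_n) :
  blk_of n k l (rshift n a) = if (a < k)%N then Pa else if (a < k + l)%N then Pb else Pc.
Proof. by rewrite /blk_of /= addKn ltnNge leq_addr. Qed.

Section AdaptedCoordinates.
Variables (R : realType) (n t1 t2 : nat) (Q P : nat -> 'cV[R]_(n + n)).
Variable W : 'cV[R]_(n + n) -> Prop.
Hypotheses (le_t12 : (t1 <= t2)%N) (famQP : symp_family n Q P).
Hypothesis W_sympl : forall i, (i < t1)%N -> W (Q i) /\ W (P i).
Hypothesis W_rad : forall i, (t1 <= i < t2)%N -> W (P i) /\ scompl W (P i).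
Hypothesis W_compl : forall i, (t2 <= i < n)%N -> scompl W (Q i) /\ scompl W (P i).
Local Notation M := (basis_mx n Q P).

Lemma adapted_basis_classified j :
  match blk_of n t1 (t2 - t1) j with
  | Qa | Pa => W (col j M) /\ coord_null (invmx M) (scompl W) j
  | Pb => W (col j M) /\ scompl W (col j M)
  | Qb => coord_null (invmx M) W j /\ coord_null (invmx M) (scompl W) j
  | Qc | Pc => coord_null (invmx M) W j /\ scompl W (col j M)
  end.
Proof.
have W_scompl v x : W v -> scompl W x -> sform v x = 0 by move=> Wv /(_ v Wv).
have scompl_W v x : scompl W v -> W x -> sform v x = 0.
  by move=> ov Wx; rewrite sformC ov // oppr0.
rewrite -(splitK j); case: (split j) => a /=.
  rewrite blk_of_lshift subnKC // colKl col_vecs_mx.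
  have coordE x : (invmx M *m x) (lshift n a) 0 = - sform (P a) x.
    by rewrite basis_coords // col_mxEu mxE.
  case: ltnP => [lt_at1 | le_t1a]; last case: ltnP => [lt_at2 | le_t2a].
  - have [WQ WP] := W_sympl lt_at1.
    by split=> // x ox; rewrite coordE W_scompl ?oppr0.
  - have [WP oP] : W (P a) /\ scompl W (P a) by apply: W_rad; rewrite le_t1a.
    by split=> x Sx; rewrite coordE; [rewrite scompl_W | rewrite W_scompl]; rewrite ?oppr0.
  - have [oQ oP] : scompl W (Q a) /\ scompl W (P a) by apply: W_compl; rewrite le_t2a ltn_ord.
    by split=> // x Wx; rewrite coordE scompl_W ?oppr0.
rewrite blk_of_rshift subnKC // colKr col_vecs_mx.
have coordE x : (invmx M *m x) (rshift n a) 0 = sform (Q a) x.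
  by rewrite basis_coords // col_mxEd mxE.
case: ltnP => [lt_at1 | le_t1a]; last case: ltnP => [lt_at2 | le_t2a].
- have [WQ WP] := W_sympl lt_at1.
  by split=> // x ox; rewrite coordE W_scompl.
- by apply: W_rad; rewrite le_t1a.
- have [oQ oP] : scompl W (Q a) /\ scompl W (P a) by apply: W_compl; rewrite le_t2a ltn_ord.
  by split=> // x Wx; rewrite coordE scompl_W.
Qed.

End AdaptedCoordinates.

(** * The linear quantum stochastic system *)

Section QuantumSystem.
Variables (R : realType) (n m : nat) (H : 'M[R]_(n + n)).
Variables (C : 'M[R]_(m + m, n + n)) (Sig : 'M[R]_(m + m)).
Hypotheses (H_sym : H^T = H) (Sig_sympl : symplectic Sig).
Local Notation J := (Jmx R n).
Local Notation Jm := (Jmx R m).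
Local Notation A := (Amat H C).
Local Notation B := (Bmat C Sig).

Lemma Amat_realizability : A^T *m J = - (J *m A) - C^T *m Jm *m C.
Proof.
pose X := C^T *m Jm *m C.
have trX : X^T = - X by rewrite /X !trmx_mul trmxK trmx_Jmx mulNmx mulmxN mulmxA.
have JA : J *m A = - H - 2^-1 *: X.
  by rewrite /Amat mulmxBr mulmxA mulmx_JJ mulNmx mul1mx -scalemxAr mulmxA mulJ_sharp.
have -> : A^T *m J = - (J *m A)^T by rewrite trmx_mul trmx_Jmx mulmxN opprK.
rewrite JA !linearB /= !linearN /= H_sym linearZ /= trX -/X !opprK scalerN -addrA.
have half : 2^-1 - 1 = - 2^-1 :> R by rewrite {2}(splitr 1) mul1r opprD addrA subrr add0r.
by congr (_ + _); rewrite -[Y in _ - Y]scale1r -scalerBl half scaleNr.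
Qed.

Lemma Bmat_realizability : B^T *m J = - (Sig^T *m Jm *m C).
Proof.
have JCs : (sharp C)^T *m J = Jm *m C.
  rewrite -[J]opprK -trmx_Jmx mulmxN -trmx_mul mulJ_sharp.
  by rewrite trmx_mul trmx_Jmx trmxK mulNmx opprK.
by rewrite /Bmat linearN /= trmx_mul mulNmx -[in LHS]mulmxA JCs mulmxA.
Qed.

Lemma trmx_Sig_J_unit : Sig^T *m Jm \in unitmx.
Proof.
case: Sig_sympl => /mulmx1_unit[Sig_unit _] _.
by rewrite unitmx_mul unitmx_tr Sig_unit Jmx_unit.
Qed.

Lemma trmx_Amat_pow_J i (x : 'cV[R]_(n + n)) :
  (forall j, (j < i)%N -> C *m A ^+ j *m x = 0) ->
  (A ^+ i)^T *m (J *m x) = (-1) ^+ i *: (J *m (A ^+ i *m x)).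
Proof.
elim: i => [|i IH] unobs_x; first by rewrite !expr0 trmx1 !mul1mx scale1r.
have powSr k : A ^+ k.+1 = A ^+ k *m A by rewrite exprSr mulmxE.
have powS k : A ^+ k.+1 = A *m A ^+ k by rewrite exprS mulmxE.
rewrite {1}powSr trmx_mul -mulmxA IH => [|j lt_ji]; last exact/unobs_x/ltnW.
rewrite -scalemxAr (mulmxA A^T) Amat_realizability mulmxDl !mulNmx -!mulmxA (mulmxA C).
by rewrite unobs_x // !mulmx0 subr0 (mulmxA A) -powS (exprS (-1)) mulN1r scaleNr scalerN.
Qed.

Lemma sform_controllable_term i u x : (forall j, (j < i)%N -> C *m A ^+ j *m x = 0) ->
  sform (A ^+ i *m B *m u) x =
  - ((-1) ^+ i * (u^T *m (Sig^T *m Jm *m (C *m A ^+ i *m x))) 0 0).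
Proof.
move=> unobs_x; rewrite /sform !trmx_mul -!mulmxA trmx_Amat_pow_J //.
rewrite -!scalemxAr (mulmxA B^T) Bmat_realizability mulNmx mulmxN scalerN !mxE -!mulmxA.
by congr (- _); rewrite mxE.
Qed.

Lemma scompl_controllable x : scompl (controllable_sub A B) x <-> unobservable_sub A C x.
Proof.
split=> [ctrl_x | unobs_x]; last first.
  move=> w [u ->]; rewrite sform_suml big1 // => i _.
  rewrite sform_controllable_term => [|j _]; last exact: unobservable_sub_pow.
  by rewrite unobservable_sub_pow // !mulmx0 mxE mulr0 oppr0.
suff unobs_lt i : (i < n + n)%N -> C *m A ^+ i *m x = 0 by move=> i; apply: unobs_lt.
elim/ltn_ind: i => i IH lt_iN.
have unobs_j j : (j < i)%N -> C *m A ^+ j *m x = 0.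
  by move=> lt_ji; apply: IH lt_ji (ltn_trans lt_ji lt_iN).
have SJCx0 : Sig^T *m Jm *m (C *m A ^+ i *m x) = 0.
  apply: cV_eq0 => u; have := ctrl_x _ (controllable_sub_pow A B i u).
  rewrite sform_controllable_term // => /eqP.
  by rewrite oppr_eq0 mulf_eq0 signr_eq0 => /eqP.
by rewrite -[C *m _ *m x](mulKmx trmx_Sig_J_unit) SJCx0 mulmx0.
Qed.

Lemma symplectic_kalman_decomposition : exists (V : 'M[R]_(n + n)) (k l : nat),
  [/\ symplectic V, (k + l <= n)%N &
      states_classified k l (V *m A *m invmx V) (V *m B) (C *m invmx V)].
Proof.
pose Wc := controllable_sub A B.
have [t1 [t2 [Q [P [/andP[le_t12 le_t2n] famQP W_sympl W_rad W_compl]]]]] :=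
  adapted_symp_basis (controllable_sub0 A B) (controllable_subD (A := A) (B := B))
    (controllable_subZ (A := A) (B := B)).
pose M := basis_mx n Q P; pose V := invmx M.
have M_unit : M \in unitmx := basis_mx_unit famQP.
have V_unit : V \in unitmx by rewrite unitmx_inv.
exists V, t1, (t2 - t1)%N; split; first exact/symplectic_gram/gram_invmx/basis_mx_gram.
  by rewrite subnKC.
have unobsE v : unobservable_sub (V *m A *m invmx V) (C *m invmx V) v <->
    scompl Wc (invmx V *m v).
  by rewrite unobservable_sub_conj // scompl_controllable.
move=> j; have := adapted_basis_classified le_t12 famQP W_sympl W_rad W_compl j.
rewrite -/M -/V -[in col j M](invmxK M) -/V -(mulmx_evec (invmx V)).
have unctrlE := orth_evec_conj V_unit j (controllable_sub_conj V_unit A B).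
have obsE := orth_evec_conj V_unit j unobsE.
case: blk_of => -[h1 h2]; split;
  by [apply/(controllable_sub_conj V_unit) | apply/unobsE | apply/unctrlE | apply/obsE].
Qed.

End QuantumSystem.

Theorem theorem1 (R : realType) (n m : nat) (H : 'M[R]_(n + n))
  (C : 'M[R]_(m + m, n + n)) (Sig : 'M[R]_(m + m)) :
  H^T = H -> symplectic Sig ->
  exists (V : 'M[R]_(n + n)) (k l : nat),
    symplectic V /\ (k + l <= n)%N /\
    let Ah := V *m Amat H C *m invmx V in
    let Bh := V *m Bmat C Sig in
    let Ch := C *m invmx V in
    states_classified k l Ah Bh Ch /\ kalman_block_form k l Ah Bh Ch.
Proof.
move=> H_sym Sig_sympl.
have [V [k [l [V_sympl le_kln classified]]]] :=
  @symplectic_kalman_decomposition R n m H C Sig H_sym Sig_sympl.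
exists V, k, l; do 2!split=> //.
by split=> //; apply: classified_block_form.
Qed.
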